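(* Let $K$ be a positive integer, let $T>0$, and set $\omega_0 = \frac{2\pi}{T}$. Let $N$ be an integer and let $0\leq t_1<t_2<\cdots<t_N < T$. Define the $(N-1)\times(2K+1)$ complex matrix $\mathbf{A}$ whose columns are indexed by $k\in\{-K,\dots,K\}$ and whose rows are indexed by $n\in\{1,\dots,N-1\}$, with entries $$\mathbf{A}_{n,k} = e^{jk\omega_0 t_{n+1}} - e^{jk\omega_0 t_{n}} \quad (k\neq 0), \qquad \mathbf{A}_{n,0} = t_{n+1}-t_n .$$ Then $\mathbf{A}$ is left-invertible (i.e., has full column rank) provided that $N \geq 2K+2$.
   Context: Here $j$ denotes the imaginary unit. The columns are ordered $k=-K,\dots,-1,0,1,\dots,K$, so the middle column is $(t_2-t_1, t_3-t_2,\dots,t_N-t_{N-1})^\top$. *)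

From HB Require Import structures.
From mathcomp Require Import all_boot all_order all_algebra.
From mathcomp Require Import all_classical all_reals.
From mathcomp Require Import trigo.
From mathcomp Require Import complex.
Set Implicit Arguments. Unset Strict Implicit. Unset Printing Implicit Defensive.
Import Order.TTheory GRing.Theory Num.Theory.
Local Open Scope ring_scope.
Local Open Scope complex_scope.

Definition expj (R : realType) (x : R) : R[i] := (cos x) +i* (sin x).

(* The matrix A of the statement. Paper's times t_1,...,t_N are t 0,...,t (N-1);
   row n : 'I_(N-1) is the paper's row n+1; column k : 'I_(2K+1) is the
   paper's column k - K. *)
Definition Amx (R : realType) (K N : nat) (T : R) (t : nat -> R) :
    'M[R[i]]_(N.-1, (2 * K).+1) :=
  let w0 := 2 * pi / T in
  \matrix_(n < N.-1, k < (2 * K).+1)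
    let kk : int := (k%:Z - K%:Z)%R in
    if kk == 0 then ((t n.+1 - t n)%:C)
    else expj ((kk%:~R) * w0 * t n.+1) - expj ((kk%:~R) * w0 * t n).

From HB Require Import structures.
From mathcomp Require Import all_boot all_order all_algebra.
From mathcomp Require Import all_classical all_reals.
From mathcomp Require Import trigo complex.
From mathcomp Require Import ring lra zify.
From mathcomp Require Import topology normedtype derive.
Import Order.TTheory GRing.Theory Num.Theory numFieldNormedType.Exports.
Local Open Scope ring_scope.
Local Open Scope complex_scope.

(* A column vector c with A c = 0 makes
   G(s) = c_0 s + sum_{k <> 0} c_k e^{jk w0 s} take one value at t_1, ..., t_N.
   Multiplying a trigonometric polynomial of degree K by e^{jK w0 s} gives a
   polynomial of degree 2K in e^{jw0 s}, and s |-> e^{jw0 s} is injective on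
   [0, T); so such a trigonometric polynomial with 2K+1 distinct zeros in
   [0, T) vanishes.
   Rolle's theorem applied to the real function Re(conj(c_0) G) yields a zero of
   its derivative in each (t_n, t_{n+1}), n <= 2K+1; that derivative is
   (half of) a trigonometric polynomial of degree K with constant coefficient
   2|c_0|^2, hence c_0 = 0.  Then G - G(t_1) is a trigonometric polynomial
   vanishing at t_1, ..., t_{2K+1}, so every c_k = 0. *)

Section Expj.
Context {R : realType}.
Implicit Types x y : R.

Lemma expj0 : expj (0 : R) = 1.
Proof. by rewrite /expj cos0 sin0. Qed.

Lemma expjD x y : expj (x + y) = expj x * expj y.
Proof. by rewrite /expj cosD sinD /=; congr (_ +i* _); ring. Qed.

Lemma expjMn x n : expj (n%:R * x) = expj x ^+ n.
Proof.
elim: n => [|n IH]; first by rewrite mul0r expj0.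
by rewrite exprSr -IH -expjD -natr1 mulrDl mul1r.
Qed.

Lemma expjJ x : (expj x)^* = expj (- x).
Proof. by rewrite /expj cosN sinN. Qed.

Lemma expj_eq1 x : - (pi *+ 2) < x < pi *+ 2 -> expj x = 1 -> x = 0.
Proof.
move=> /andP[x_gt x_lt] [cos1 sin0].
have sin_half : sin (x / 2) = 0.
  have : sin (x / 2) ^+ 2 = 0.
    move: cos1; rewrite {1}(splitr x) -mulr2n cos_mulr2n cos2sin2 mulr2n.
    by lra.
  by move/eqP; rewrite sqrf_eq0 => /eqP.
have [x_neg|x_pos|//] := ltgtP x 0.
- have : 0 < sin (- (x / 2)) by apply: sin_gt0_pi; lra.
  by rewrite sinN sin_half; lra.
- have : 0 < sin (x / 2) by apply: sin_gt0_pi; lra.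
  by rewrite sin_half; lra.
Qed.

Lemma expj_inj : {in `[0, pi *+ 2[ &, injective (@expj R)}.
Proof.
move=> x y; rewrite !in_itv /= => /andP[x0 x2] /andP[y0 y2] exy.
apply/eqP; rewrite -subr_eq0; apply/eqP/expj_eq1; first lra.
by rewrite expjD exy -expjD subrr expj0.
Qed.

End Expj.

Definition ord_mid (K : nat) : 'I_(2 * K).+1 := inord K.

Lemma subz_mid_eq0 {K : nat} (k : 'I_(2 * K).+1) :
  (k%:Z - K%:Z == 0) = (k == ord_mid K).
Proof. by rewrite subr_eq0 eqz_nat -val_eqE /= inordK //; lia. Qed.

Lemma rev_ord_mid (K : nat) : rev_ord (ord_mid K) = ord_mid K.
Proof. by apply/val_inj; rewrite /= inordK; lia. Qed.

Lemma subz_rev_ord {K : nat} (k : 'I_(2 * K).+1) :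
  (rev_ord k)%:Z - K%:Z = - (k%:Z - K%:Z).
Proof. have := ltn_ord k; rewrite /= subSS; lia. Qed.

Definition freq {R : realType} (K : nat) (T : R) (k : 'I_(2 * K).+1) : R :=
  (k%:Z - K%:Z)%:~R * (2 * pi / T).

Definition trigpoly {R : realType} (K : nat) (T : R)
    (d : 'I_(2 * K).+1 -> R[i]) (s : R) : R[i] :=
  \sum_k d k * expj (freq K T k * s).

Section TrigPoly.
Context {R : realType} {K : nat} {T : R}.
Implicit Types (d : 'I_(2 * K).+1 -> R[i]) (s : R).
Local Notation freq := (freq K T).
Local Notation trigpoly := (trigpoly K T).

Lemma freq_mid : freq (ord_mid K) = 0.
Proof.
have := subz_mid_eq0 (ord_mid K); rewrite eqxx /freq => /eqP ->.
by rewrite mul0r.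
Qed.

Lemma freq_rev k : freq (rev_ord k) = - freq k.
Proof. by rewrite /freq subz_rev_ord intrN mulNr. Qed.

Lemma trigpolyD d1 d2 s :
  trigpoly d1 s + trigpoly d2 s = trigpoly (fun k => d1 k + d2 k) s.
Proof.
by rewrite /trigpoly -big_split; apply: eq_bigr => k _; rewrite mulrDl.
Qed.

Lemma trigpoly_mid a s : trigpoly (fun k => (k == ord_mid K)%:R * a) s = a.
Proof.
rewrite /trigpoly (bigD1 (ord_mid K)) //= big1 => [|k /negbTE ->]; last first.
  by rewrite mul0r mul0r.
by rewrite freq_mid mul0r expj0 eqxx mul1r mulr1 addr0.
Qed.

Lemma trigpolyJ d s :
  (trigpoly d s)^* = trigpoly (fun k => (d (rev_ord k))^*) s.
Proof.
rewrite /trigpoly raddf_sum (reindex_inj rev_ord_inj) /=.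
apply: eq_bigr => k _; rewrite rmorphM.
by have := expjJ (freq (rev_ord k) * s); rewrite freq_rev mulNr opprK => <-.
Qed.

Lemma trigpoly_horner d s :
  expj (2 * pi / T * s) ^+ K * trigpoly d s
  = (\poly_(j < (2 * K).+1) d (inord j)).[expj (2 * pi / T * s)].
Proof.
rewrite horner_poly /trigpoly mulr_sumr; apply: eq_bigr => k _.
rewrite inord_val mulrCA -expjMn -expjMn -expjD /freq; congr (_ * expj _).
by rewrite intrB; ring.
Qed.

Hypothesis T_gt0 : 0 < T.

Lemma expj_period_inj :
  {in `[0, T[ &, injective (fun s => expj (2 * pi / T * s))}.
Proof.
have w_gt0 : 0 < 2 * pi / T by rewrite divr_gt0 // mulr_gt0 // pi_gt0.
have wT : 2 * pi / T * T = pi *+ 2 by rewrite divfK ?gt_eqF // mulr_natl.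
have w_range u : 0 <= u < T -> 2 * pi / T * u \in `[0, pi *+ 2[.
  case/andP=> u0 uT; rewrite in_itv /= -wT (mulr_ge0 (ltW w_gt0) u0).
  by rewrite ltr_pM2l.
move=> x y; rewrite !in_itv /= => /w_range wx /w_range wy /expj_inj.
by move=> /(_ wx wy); apply: mulfI; rewrite gt_eqF.
Qed.

Lemma trigpoly_eq0 d (s : 'I_(2 * K).+1 -> R) :
  injective s -> (forall i, 0 <= s i < T) -> (forall i, trigpoly d (s i) = 0) ->
  forall k, d k = 0.
Proof.
move=> s_inj s_range ds0 k.
pose z i := expj (2 * pi / T * s i).
pose q := \poly_(j < (2 * K).+1) d (inord j).
have q_root i : root q (z i) by rewrite /root -trigpoly_horner ds0 mulr0.
have z_inj : injective z.
  move=> i j zij; apply/s_inj/(expj_period_inj _ _ _ _ zij); exact: s_range.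
have q0 : q = 0.
  apply: (@roots_geq_poly_eq0 _ q [seq z i | i <- enum 'I_(2 * K).+1]).
  - by apply/allP => _ /mapP[i _ ->].
  - by rewrite map_inj_uniq // enum_uniq.
  - by rewrite size_map size_enum_ord size_poly.
have := congr1 (fun p : {poly R[i]} => p`_k) q0.
by rewrite coef_poly ltn_ord inord_val coef0.
Qed.

End TrigPoly.

Definition basis_fun {R : realType} (K : nat) (T : R) (k : 'I_(2 * K).+1)
    (s : R) : R[i] :=
  if k%:Z - K%:Z == 0 then s%:C else expj (freq K T k * s).

Definition basis_deriv {R : realType} (K : nat) (T : R)
    (k : 'I_(2 * K).+1) : R[i] :=
  if k == ord_mid K then 1 else 'i * (freq K T k)%:C.

Section BasisFun.
Context {R : realType} (K : nat) (T : R).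
Local Notation basis_fun := (basis_fun K T).
Local Notation basis_deriv := (basis_deriv K T).
Local Notation freq := (freq K T).
Implicit Types (k : 'I_(2 * K).+1) (s : R).

Lemma AmxE N (t : nat -> R) n k :
  Amx K N T t n k = basis_fun k (t n.+1) - basis_fun k (t n).
Proof.
by rewrite mxE /basis_fun /freq /=; case: (_ - _ == 0); rewrite ?raddfB.
Qed.

Lemma is_derive_Re_expj (a : R[i]) (e s : R) :
  is_derive s 1 (fun u => complex.Re (a * expj (e * u)))
    (complex.Re (a * ('i * e%:C) * expj (e * s))).
Proof.
case: a => p q.
have -> : (fun u => complex.Re ((p +i* q) * expj (e * u)))
    = p *: (cos \o *:%R e) - q *: (sin \o *:%R e) by [].
by apply: is_derive_eq; rewrite /= /GRing.scale /=; ring.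
Qed.

Lemma is_derive_Re_basis_fun (a : R[i]) k s :
  is_derive s 1 (fun u => complex.Re (a * basis_fun k u))
    (complex.Re (a * basis_deriv k * expj (freq k * s))).
Proof.
rewrite /basis_fun /basis_deriv subz_mid_eq0; case: eqP => [->|_].
  rewrite freq_mid mul0r expj0 !mulr1.
  have -> : (fun u => complex.Re (a * u%:C)) = complex.Re a *: id.
    by apply/funext => u; case: a => p q /=; rewrite mulr0 subr0.
  by apply: is_derive_eq; rewrite /GRing.scale /= mulr1.
exact: is_derive_Re_expj.
Qed.

End BasisFun.

Lemma ltn_homo_inj {R : numDomainType} n (f : 'I_n -> R) :
  (forall i j : 'I_n, (i < j)%N -> f i < f j) -> injective f.
Proof.
move=> f_incr i j fij; apply/val_inj.
by case: (ltngtP i j) => // /f_incr; rewrite fij ltxx.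
Qed.

Lemma left_inverse_of_mulmx_inj (F : fieldType) m n (A : 'M[F]_(m, n)) :
  (forall c : 'cV_n, A *m c = 0 -> c = 0) -> exists B, B *m A = 1%:M.
Proof.
move=> A_inj; apply/row_fullP; rewrite /row_full -mxrank_tr.
rewrite -[_ == n]/(row_free A^T) -kermx_eq0.
apply/eqP/row_matrixP => i; rewrite row0; apply: trmx_inj; rewrite trmx0.
apply: A_inj; apply: trmx_inj; rewrite trmx_mul trmxK trmx0.
by apply/sub_kermxP; apply: row_sub.
Qed.

Section Kernel.
Context {R : realType} {K N : nat} {T : R} {t : nat -> R}.
Hypotheses (T_gt0 : 0 < T) (t0_ge0 : 0 <= t 0%N)
  (t_incr : forall i, (i.+1 < N)%N -> t i < t i.+1)
  (tN_lt : t N.-1 < T) (KN : (2 * K + 2 <= N)%N).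

Lemma t_lt : {in gtn N &, {homo t : i j / (i < j)%N >-> i < j}}.
Proof.
apply: homo_ltn_in => [y x z|i j _ jN k /andP[_ kj]|i _]; first exact: lt_trans.
  by rewrite inE (ltn_trans kj).
by rewrite !inE; apply: t_incr.
Qed.

Lemma t_le {i j} : (i <= j)%N -> (j < N)%N -> t i <= t j.
Proof.
rewrite leq_eqVlt => /predU1P[->//|ij] jN.
by rewrite ltW // t_lt // inE (ltn_trans ij).
Qed.

Lemma t_range {i} : (i < N)%N -> 0 <= t i < T.
Proof.
move=> iN; rewrite (le_trans t0_ge0) ?t_le //=.
by apply: le_lt_trans tN_lt; apply: t_le; lia.
Qed.

Lemma ord_succ_ltN (i : 'I_(2 * K).+1) : (i.+1 < N)%N.
Proof. by have := ltn_ord i; lia. Qed.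

Variable c : 'I_(2 * K).+1 -> R[i].
Hypothesis Ac0 : forall n : 'I_N.-1, \sum_k Amx K N T t n k * c k = 0.

Let G s := \sum_k c k * basis_fun K T k s.
Local Notation cmid := (c (ord_mid K)).

Lemma G_const n : (n < N)%N -> G (t n) = G (t 0%N).
Proof.
elim: n => // n IHn nN; rewrite -IHn ?(ltnW nN) //.
have nN' : (n < N.-1)%N by lia.
apply/eqP; rewrite -subr_eq0 -(Ac0 (Ordinal nN')) /G -sumrB.
by apply/eqP/eq_bigr => k _; rewrite AmxE [RHS]mulrC mulrBr.
Qed.

Lemma G_trigpoly s : cmid = 0 -> G s = trigpoly K T c s.
Proof.
move=> cmid0; apply: eq_bigr => k _; rewrite /basis_fun subz_mid_eq0.
by case: eqP => [->|//]; rewrite cmid0 !mul0r.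
Qed.

Lemma ker_eq0_of_mid_eq0 : cmid = 0 -> forall k, c k = 0.
Proof.
move=> cmid0.
pose d k := c k + (k == ord_mid K)%:R * - G (t 0%N).
have d0 : forall k, d k = 0.
  apply: (trigpoly_eq0 T_gt0 d (fun i : 'I_(2 * K).+1 => t i)).
  - by apply: ltn_homo_inj => i j; apply: t_lt; rewrite inE ltnW ?ord_succ_ltN.
  - by move=> i; apply/t_range/ltnW/ord_succ_ltN.
  move=> i; rewrite -trigpolyD trigpoly_mid -G_trigpoly //.
  by rewrite G_const ?subrr // ltnW ?ord_succ_ltN.
move=> k; have := d0 k; rewrite /d; case: eqP => [->|_]; first by rewrite cmid0.
by rewrite mul0r addr0.
Qed.

Let beta k := cmid^* * c k * basis_deriv K T k.
Let ReG u := complex.Re (cmid^* * G u).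

Lemma is_derive_ReG (s : R) :
  is_derive s 1 ReG (complex.Re (trigpoly K T beta s)).
Proof.
have -> : ReG = \sum_k (fun u => complex.Re (cmid^* * c k * basis_fun K T k u)).
  apply/funext => u; rewrite /ReG /G fct_sumE mulr_sumr raddf_sum.
  by apply: eq_bigr => k _; rewrite mulrA.
rewrite /trigpoly raddf_sum; apply: is_derive_sum => k.
exact: is_derive_Re_basis_fun.
Qed.

Lemma exists_critical_point (i : 'I_(2 * K).+1) :
  exists2 x, t i < x < t i.+1 & complex.Re (trigpoly K T beta x) = 0.
Proof.
have ReG_derivable u : derivable ReG u 1.
  exact: (ex_derive (is_derive := is_derive_ReG u)).
have ReG_eq : ReG (t i) = ReG (t i.+1).
  by rewrite /ReG !G_const // ?(ltnW (ord_succ_ltN i)) ?ord_succ_ltN.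
have [x x_in hx0] := Rolle (t_incr _ (ord_succ_ltN i))
  (fun u _ => ReG_derivable u)
  (derivable_within_continuous (fun u _ => ReG_derivable u)) ReG_eq.
exists x; first by rewrite in_itv in x_in.
rewrite -(derive_val (is_derive := is_derive_ReG x)).
exact: (derive_val (is_derive := hx0)).
Qed.

Lemma ker_mid_eq0 : cmid = 0.
Proof.
have [x x_in x_crit] := fin_all_exists2 exists_critical_point.
pose gamma k := beta k + (beta (rev_ord k))^*.
have gamma0 : forall k, gamma k = 0.
  apply: (trigpoly_eq0 T_gt0 gamma x).
  - apply: ltn_homo_inj => i j ij; have /andP[_ xi] := x_in i.
    have /andP[xj _] := x_in j; apply: lt_trans xi (le_lt_trans _ xj).
    by apply: t_le ij (ltnW (ord_succ_ltN j)).
  - move=> i; have /andP[xi ix] := x_in i.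
    have /andP[t0 _] := t_range (ltnW (ord_succ_ltN i)).
    have /andP[_ tT] := t_range (ord_succ_ltN i).
    by rewrite (le_trans t0 (ltW xi)) (lt_trans ix tT).
  by move=> i; rewrite /gamma -trigpolyD -trigpolyJ addcJ x_crit mulr0.
have := gamma0 (ord_mid K); rewrite /gamma rev_ord_mid /beta /basis_deriv eqxx.
rewrite !mulr1 addcJ => /eqP; rewrite mulf_eq0 pnatr_eq0 /= => /eqP[].
case: cmid => a b /= ab0; apply/eqP; rewrite eq_complex /=.
by apply/andP; split; apply/eqP; nra.
Qed.

Lemma Amx_ker_eq0 k : c k = 0.
Proof. exact: ker_eq0_of_mid_eq0 ker_mid_eq0 k. Qed.

End Kernel.

Theorem theorem1 (R : realType) (K N : nat) (T : R) (t : nat -> R) :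
  (0 < K)%N -> 0 < T ->
  0 <= t 0%N ->
  (forall i : nat, (i.+1 < N)%N -> t i < t i.+1) ->
  t N.-1 < T ->
  (2 * K + 2 <= N)%N ->
  exists B : 'M[R[i]]_((2 * K).+1, N.-1), B *m Amx K N T t = 1%:M.
Proof.
move=> _ T_gt0 t0_ge0 t_incr tN_lt KN.
apply: left_inverse_of_mulmx_inj => c Ac0.
apply/matrixP => k j; rewrite ord1 mxE.
apply: (Amx_ker_eq0 T_gt0 t0_ge0 t_incr tN_lt KN (fun k => c k 0)) => n.
by have /matrixP/(_ n 0) := Ac0; rewrite !mxE.
Qed.
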